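(* Let $f(x):=x^n+a_1x^{n-1}+a_2x^{n-2}+\cdots+a_n$ be a real polynomial, and set $a_0:=1$. Suppose $f$ has (counting multiplicities) $n_+$ roots with positive real part, $n_-$ roots with negative real part and $n_0<n$ purely imaginary roots (roots with zero real part), so $n_++n_-+n_0=n$. Let \[ P(x):=\sum_{j\ge 0,\ 2j\le n}(-1)^j a_{2j}\,x^{n-2j}=x^n-a_2x^{n-2}+a_4x^{n-4}-\cdots, \] \[ Q(x):=\sum_{j\ge 0,\ 2j+1\le n}(-1)^j a_{2j+1}\,x^{n-2j-1}=a_1x^{n-1}-a_3x^{n-3}+a_5x^{n-5}-\cdots, \] and $d:=n-2\min(n_+,n_-)$. Then, counting multiplicities, there exist at least $d$ real roots $\mu_1,\ldots,\mu_d$ of $P$ and at least $d-1$ real roots $\nu_1,\ldots,\nu_{d-1}$ of $Q$ such that \[ \mu_1\le\nu_1\le\mu_2\le\nu_2\le\cdots\le\nu_{d-1}\le\mu_d . \] If $n_0=0$, then these inequalities may be taken to be strict.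
   Context: ''Counting multiplicities'' means that a root of multiplicity $m$ may appear up to $m$ times in the respective list. *)

From mathcomp Require Import all_boot all_order all_algebra.
From mathcomp Require Import complex.
Set Implicit Arguments. Unset Strict Implicit. Unset Printing Implicit Defensive.
Import Order.TTheory GRing.Theory Num.Theory.
Local Open Scope ring_scope.

(* The polynomial f = sum_{i=0}^n a_i x^(n-i)  (with a_0 = 1 imposed as a hypothesis). *)
Definition fpoly (R : nzRingType) (n : nat) (a : nat -> R) : {poly R} :=
  \sum_(i < n.+1) a i *: 'X^(n - i).

Definition Ppoly (R : nzRingType) (n : nat) (a : nat -> R) : {poly R} :=
  \sum_(j < (n./2).+1) ((-1) ^+ j * a j.*2) *: 'X^(n - j.*2).

Definition Qpoly (R : nzRingType) (n : nat) (a : nat -> R) : {poly R} :=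
  \sum_(j < n.+1./2) ((-1) ^+ j * a j.*2.+1) *: 'X^(n - j.*2.+1).

Definition interlace_le (R : realDomainType) (mu nu : seq R) :=
  forall i, (i < size nu)%N -> mu`_i <= nu`_i /\ nu`_i <= mu`_i.+1.
Definition interlace_lt (R : realDomainType) (mu nu : seq R) :=
  forall i, (i < size nu)%N -> mu`_i < nu`_i /\ nu`_i < mu`_i.+1.

From mathcomp Require Import all_boot all_order all_algebra.
From mathcomp Require Import complex.
From mathcomp Require Import polyorder polyrcf qe_rcf_th.
From mathcomp Require Import ring lra zify.
Set Implicit Arguments. Unset Strict Implicit. Unset Printing Implicit Defensive.
Import Order.TTheory GRing.Theory Num.Theory.
Local Open Scope ring_scope.

(* Put h(y) := i^-n f(iy) = P(y) - i Q(y).  Its roots are the z / i for the roots z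
   of f, so roots of f with negative (positive) real part become roots of h in the
   upper (lower) half plane, and purely imaginary roots become real roots common to
   P and Q.  Once this common real factor is removed, the Cauchy index of Q/P over the
   reals is #(upper) - #(lower) = n_- - n_+, which is proved root by root.  Between
   two consecutive roots of Q the index is at most 1, so an index of absolute value K
   yields K roots of P strictly interlaced with K - 1 roots of Q.  Adding the common
   real roots to both lists keeps the interlacing weak, and
   n - 2 min(n_+, n_-) = |n_- - n_+| + n_0. *)

Local Notation count_upper ws := (count (fun w => 0 < complex.Im w) ws).
Local Notation count_lower ws := (count (fun w => complex.Im w < 0) ws).
Local Notation count_real ws := (count (fun w => complex.Im w == 0) ws).

Section CauchyIndex.
Variable R : rcfType.
Implicit Types p q : {poly R}.

Lemma cindexR_modp q p : cindexR q p = cindexR (q %% p) p.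
Proof.
have [->|p0] := eqVneq p 0; first by rewrite !cindexRpC.
apply: eq_bigr => x _; rewrite jump_mod modpE jump_mulCp -exprVn sgzX.
by rewrite -[sgz _^-1]sgz_sgr sgrV sgz_sgr.
Qed.

Lemma cindexR_addMl q p k : cindexR (q + k * p) p = cindexR q p.
Proof. by rewrite cindexR_modp modpD modp_mull addr0 -cindexR_modp. Qed.

Lemma cindexR_mulCp c q p : cindexR (c *: q) p = sgz c * cindexR q p.
Proof. by rewrite /cindexR big_distrr; apply: eq_bigr => x _; rewrite jump_mulCp. Qed.

Lemma cindexR_oppp q p : cindexR (- q) p = - cindexR q p.
Proof. by rewrite -scaleN1r cindexR_mulCp sgzN sgz1 mulN1r. Qed.

Lemma cindexR_mul_pos g q p :
  (forall x, 0 < g.[x]) -> cindexR (g * q) p = cindexR q p.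
Proof.
move=> g_gt0; have g_nroot x : ~~ root g x by rewrite rootE gt_eqF.
have g0 : g != 0 by apply: contraNneq (g_nroot 0) => ->; apply: root0.
have [->|q0] := eqVneq q 0; first by rewrite mulr0.
have [->|p0] := eqVneq p 0; first by rewrite !cindexRpC.
apply: eq_bigr => x _; rewrite /jump mulf_eq0 (negPf g0) (negPf q0) /=.
rewrite mu_mul ?mulf_neq0 // (muNroot (g_nroot x)) add0n -mulrA sgp_right_mul.
by rewrite sgp_rightNroot // gtr0_sg // mul1r.
Qed.

Lemma cindexR_inv p q : cindexR q p + cindexR p q = crossR (p * q).
Proof.
rewrite cindexR_rec /next_mod cindexR_mulCp -addrA -[RHS]addr0; congr (_ + _).
rewrite /cindexR big_distrr -big_split /= big1 // => x _.
by rewrite [jump p q x]jump_mod sgzN sgzX mulNr addNr.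
Qed.

Lemma crossR_monic_even p : p \is monic -> ~~ odd (size p) -> crossR p = 1.
Proof.
move=> p_monic; rewrite /crossR /sgp_minfty /sgp_pinfty (eqP p_monic) mulr1 sgr1.
have := monic_neq0 p_monic; rewrite -size_poly_gt0 => /prednK <-.
rewrite /= negbK => p_odd.
by rewrite -signr_odd p_odd expr1 sgrN1 /variation sgz1 mul1r mulN1r oppr_lt0 ltr01.
Qed.

End CauchyIndex.

Section HurwitzCount.
Variable R : rcfType.
Implicit Types P Q : {poly R}.
Local Notation toC := (map_poly (real_complex R)).

Definition hpoly P Q : {poly R[i]} := toC P - 'i%C%:P * toC Q.

Lemma hpoly_inj P Q P' Q' : hpoly P Q = hpoly P' Q' -> P = P' /\ Q = Q'.
Proof.
move=> eqh; suff coefE k : P`_k = P'`_k /\ Q`_k = Q'`_k.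
  by split; apply/polyP => k; case: (coefE k).
move: (congr1 (fun h : {poly R[i]} => h`_k) eqh) => /eqP.
rewrite /hpoly !coefB !coefCM !coef_map /= eq_complex /= !mul0r !mul1r !subr0 !add0r.
by rewrite eqr_opp => /andP[/eqP-> /eqP->].
Qed.

Lemma hpoly_mull r P Q : hpoly (r * P) (r * Q) = toC r * hpoly P Q.
Proof. by rewrite /hpoly !rmorphM mulrBr mulrCA. Qed.

Lemma hpoly_mulXsubC (w : R[i]) P Q :
  let s := 'X - (complex.Re w)%:P in
  ('X - w%:P) * hpoly P Q =
  hpoly (s * P - complex.Im w *: Q) (s * Q + complex.Im w *: P).
Proof.
move=> s; rewrite /hpoly /s !(rmorphB, rmorphD, rmorphM) /= !map_polyZ /=.
rewrite map_polyX map_polyC /= {1}[w]complexE polyCD polyCM -!mul_polyC.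
set I := 'i%C%:P; set tP := toC P; set tQ := toC Q.
set a := ((complex.Re w)%:C%C)%:P; set b := ((complex.Im w)%:C%C)%:P.
have I2 : I * I = -1 by rewrite -polyCM -expr2 sqr_i polyCN.
apply/eqP; rewrite -subr_eq0; apply/eqP.
apply: (@eq_trans _ _ ((I * I + 1) * b * tQ)); first by ring.
by rewrite I2 addNr !mul0r.
Qed.

(* Multiplying h = P - iQ by X - (al + i be) gives D - iN.  As be N = g P - s D
   with g = s^2 + be^2 > 0, the index of N/D is sgz be times that of P/D, which
   the inversion formula (crossR (D P) = 1) ties to the index of Q/P. *)
Lemma cindexR_hpoly_step (al be : R) P Q :
  be != 0 -> P \is monic -> (size Q < size P)%N ->
  let s := 'X - al%:P in
  let D := s * P - be *: Q in
  let N := s * Q + be *: P in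
  [/\ cindexR N D = cindexR Q P + sgz be, D \is monic & (size N < size D)%N].
Proof.
move=> be0 P_monic sQP s D N.
have sP : size (s * P) = (size P).+1.
  by rewrite size_monicM ?monicXsubC ?monic_neq0 // size_XsubC.
have sQ : (size (be *: Q) < size (s * P)%R)%N.
  by rewrite sP ltnS ltnW // (leq_ltn_trans (size_scale_leq _ _)).
have D_monic : D \is monic.
  by rewrite monicE lead_coefDl ?size_polyN // -monicE monicMl ?monicXsubC.
have sD : size D = (size P).+1 by rewrite size_polyDl ?size_polyN.
split=> //; last first.
  rewrite sD ltnS (leq_trans (size_polyD _ _)) // geq_max size_scale_leq andbT.
  have [->|Q0] := eqVneq Q 0; first by rewrite mulr0 size_poly0.
  by rewrite size_monicM ?monicXsubC // size_XsubC.
pose g := s ^+ 2 + (be ^+ 2)%:P.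
have g_gt0 x : 0 < g.[x].
  by rewrite !hornerE ltr_wpDl ?sqr_ge0 // exprn_even_gt0.
have ND : cindexR P D = sgz be * cindexR N D.
  have eN : be *: N = g * P + (- s) * D by rewrite /N /D /g -!mul_polyC rmorphXn; ring.
  by rewrite -cindexR_mulCp eN cindexR_addMl cindexR_mul_pos.
have DP : cindexR D P = - (sgz be * cindexR Q P).
  by rewrite /D addrC cindexR_addMl cindexR_oppp cindexR_mulCp.
have cross1 : cindexR P D + cindexR D P = 1.
  rewrite cindexR_inv crossR_monic_even ?monicMl //.
  by rewrite size_monicM ?monic_neq0 // sD addSn /= oddD addbb.
have sgz_be2 : sgz be * sgz be = 1 by case: sgzP be0.
apply: (@mulfI _ (sgz be)); first by rewrite sgz_eq0.
rewrite mulrDr sgz_be2 -ND; move: cross1; rewrite DP => /eqP.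
by rewrite subr_eq addrC => /eqP.
Qed.

Lemma cindexR_hpoly_prod (ws : seq R[i]) : all (fun w => complex.Im w != 0) ws ->
  exists P Q, [/\ hpoly P Q = \prod_(w <- ws) ('X - w%:P), P \is monic,
    (size Q < size P)%N
  & cindexR Q P = (count_upper ws)%:Z - (count_lower ws)%:Z].
Proof.
elim: ws => [_|w ws IH /= /andP[w0 /IH [P [Q [eh P_monic sQP indexQP]]]]].
  exists 1, 0; rewrite big_nil /hpoly rmorph1 rmorph0 mulr0 subr0 monic1.
  by rewrite size_poly0 size_poly1 cindexR0p.
have [indexND D_monic sND] := cindexR_hpoly_step (complex.Re w) w0 P_monic sQP.
pose s := 'X - (complex.Re w)%:P.
exists (s * P - complex.Im w *: Q), (s * Q + complex.Im w *: P).
split=> //; first by rewrite big_cons -eh hpoly_mulXsubC.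
rewrite indexND indexQP; case: (ltrgt0P (complex.Im w)) w0 => // w_sgn _.
  by rewrite gtr0_sgz // add0n add1n -addn1 !PoszD; ring.
by rewrite ltr0_sgz // add0n add1n -addn1 !PoszD; ring.
Qed.

End HurwitzCount.

Section Interlacing.
Variable R : realDomainType.
Implicit Types (s mu nu ts : seq R) (x y : R).
Local Notation count_le x s := (count (fun y => y <= x) s).

Lemma interlace_ltW mu nu : interlace_lt mu nu -> interlace_le mu nu.
Proof. by move=> mu_nu i /mu_nu[lt1 lt2]; rewrite !ltW. Qed.

Lemma interlace_lt_sorted mu nu : (size mu <= (size nu).+1)%N ->
  interlace_lt mu nu -> sorted <%R mu /\ sorted <%R nu.
Proof.
move=> size_mu mu_nu; split; apply/(sortedP 0) => i i_lt.
  have /mu_nu[lt1 lt2] : (i < size nu)%N by rewrite -ltnS (leq_trans i_lt).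
  exact: lt_trans lt2.
have [_ lt1] := mu_nu i (ltnW i_lt); have [lt2 _] := mu_nu i.+1 i_lt.
exact: lt_trans lt2.
Qed.

Lemma interlace_lt_rcons mu nu y z : size mu = (size nu).+1 ->
  interlace_lt mu nu -> {in mu, forall m, m < y} -> y < z ->
  interlace_lt (rcons mu z) (rcons nu y).
Proof.
move=> size_mu mu_nu mu_lt_y yz i; rewrite size_rcons ltnS => i_le.
rewrite !nth_rcons size_mu ltnS i_le; case: ltngtP i_le => // [i_lt|->] _.
  by rewrite ltnS i_lt; apply: mu_nu.
by rewrite ltnn eqxx yz mu_lt_y // mem_nth // size_mu.
Qed.

Lemma sorted_nth_le s i x : sorted <=%R s -> (i < size s)%N ->
  (s`_i <= x) = (i < count_le x s)%N.
Proof.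
elim: s i => [//|y s IH] i /= s_sorted i_lt.
have s_ge_y := order_path_min le_trans s_sorted.
have [yx|xy] := lerP y x.
  case: i i_lt => [|i] /= i_lt; first by rewrite yx.
  by rewrite add1n ltnS IH // (path_sorted s_sorted).
have -> : count_le x s = 0%N.
  apply/eqP; rewrite -leqn0 leqNgt -has_count; apply/hasPn => z /(allP s_ge_y) yz.
  by rewrite -ltNge (lt_le_trans xy yz).
rewrite add0n ltn0; apply/negbTE; rewrite -ltNge.
case: i i_lt => [|i] //= i_lt; apply: (lt_le_trans xy).
by apply: (allP s_ge_y); rewrite mem_nth.
Qed.

Section CountCharacterization.
Variables mu nu : seq R.
Hypotheses (mu_sorted : sorted <=%R mu) (nu_sorted : sorted <=%R nu).
Hypothesis size_mu : size mu = (size nu).+1.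

Lemma interlace_le_count : interlace_le mu nu ->
  forall x, (count_le x nu <= count_le x mu <= (count_le x nu).+1)%N.
Proof.
move=> mu_nu x; apply/andP; split.
  case E : (count_le x nu) => [//|c].
  have c_lt : (c < size nu)%N by rewrite -ltnS -E ltnS count_size.
  have [le1 _] := mu_nu c c_lt.
  have : nu`_c <= x by rewrite sorted_nth_le // E.
  by move/(le_trans le1); rewrite sorted_nth_le // size_mu ltnW.
case E : (count_le x mu) => [|[|c]] //.
have c_lt : (c < size nu)%N by rewrite -ltnS -size_mu -E count_size.
have [_ le1] := mu_nu c c_lt.
have : mu`_c.+1 <= x by rewrite sorted_nth_le // ?E // size_mu.
by move/(le_trans le1); rewrite sorted_nth_le // ltnS.
Qed.

Lemma count_interlace_le :
  (forall x, (count_le x nu <= count_le x mu <= (count_le x nu).+1)%N) ->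
  interlace_le mu nu.
Proof.
move=> count_mu_nu i i_lt.
have i_lt_mu : (i < size mu)%N by rewrite size_mu ltnW.
have i1_lt_mu : (i.+1 < size mu)%N by rewrite size_mu.
split.
  have /andP[le1 _] := count_mu_nu nu`_i.
  by rewrite sorted_nth_le // (leq_trans _ le1) // -sorted_nth_le.
rewrite leNgt; apply/negP => lt_mu_nu.
have /andP[_ le1] := count_mu_nu mu`_i.+1.
have : (i.+1 < count_le (mu`_i.+1)%R mu)%N by rewrite -sorted_nth_le.
move/leq_trans/(_ le1); rewrite ltnS -sorted_nth_le //.
by rewrite leNgt lt_mu_nu.
Qed.

End CountCharacterization.

Lemma interlace_le_sort_cat mu nu ts : sorted <=%R mu -> sorted <=%R nu ->
  size mu = (size nu).+1 -> interlace_le mu nu ->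
  interlace_le (sort <=%R (mu ++ ts)) (sort <=%R (nu ++ ts)).
Proof.
move=> mu_sorted nu_sorted size_mu.
move=> /(interlace_le_count mu_sorted nu_sorted size_mu) cnt.
apply: count_interlace_le; rewrite ?sort_le_sorted ?size_sort ?size_cat ?size_mu //.
move=> x.
by rewrite !(permP (permEl (perm_sort _ _))) !count_cat -addSn !leq_add2r cnt.
Qed.

Lemma interlace_le_behead s : sorted <=%R s -> interlace_le s (behead s).
Proof.
move=> /(sortedP 0) s_sorted i; rewrite size_behead nth_behead => i_lt.
by split=> //; apply: s_sorted; rewrite -ltn_predRL.
Qed.

End Interlacing.

Section InterlacingRoots.
Variable R : rcfType.
Implicit Types (p q : {poly R}) (a b c : R) (I J : interval R).

Lemma roots_cat p a c b : a < c -> c < b -> ~~ root p c ->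
  roots p a b = roots p a c ++ roots p c b.
Proof.
move=> ac cb pc; have [->|p0] := eqVneq p 0; first by rewrite !roots0.
have c_in : c \in `]a, b[ by rewrite in_itv /= ac cb.
symmetry; apply: roots_uniq => //.
  by apply: (cat_roots_on c_in pc); rewrite ?sorted_roots //; exact: roots_on_roots.
rewrite lt_sorted_pairwise pairwise_cat -!lt_sorted_pairwise !sorted_roots !andbT.
apply/allrelP => x y /roots_in x_in /roots_in y_in.
by rewrite (lt_trans (_ : x < c) (_ : c < y)) ?(itvP x_in) ?(itvP y_in).
Qed.

Lemma cindex_cat q p a c b : a < c -> c < b -> ~~ root p c ->
  cindex a b q p = cindex a c q p + cindex c b q p.
Proof. by move=> ac cb pc; rewrite /cindex (roots_cat ac cb pc) big_cat. Qed.

Lemma cindex_shrink q p a a' b' b : a < a' -> a' < b' -> b' < b ->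
  {in `]a, a'], forall x, ~~ root p x} -> {in `[b', b[, forall x, ~~ root p x} ->
  cindex a b q p = cindex a' b' q p.
Proof.
move=> aa' a'b' b'b p_left p_right.
have a'b : a' < b by apply: lt_trans b'b.
rewrite (cindex_cat _ aa' a'b) ?p_left ?in_itv /= ?aa' ?lexx //.
rewrite (cindex_cat _ a'b' b'b) ?p_right ?in_itv /= ?b'b ?lexx //.
rewrite [cindex a a' q p]/cindex [cindex b' b q p]/cindex.
rewrite !no_root_roots ?big_nil ?add0r ?addr0 //.
- move=> x; rewrite in_itv /= => /andP[x_gt x_lt].
  by apply: p_right; rewrite in_itv /= x_lt ltW.
- move=> x; rewrite in_itv /= => /andP[x_gt x_lt].
  by apply: p_left; rewrite in_itv /= x_gt ltW.
Qed.

Lemma variation_le1 (x y : R) : variation x y <= 1.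
Proof. by rewrite /variation; case: (x * y < 0); case: sgzP. Qed.

(* Shrinking (a, b) to the hull of the roots of p makes the endpoints regular,
   so the inversion formula applies; the index of p/q vanishes there. *)
Lemma cindex_le1 q p a b :
  {in `]a, b[, forall x, ~~ root q x} -> cindex a b q p <= 1.
Proof.
move=> q_nroot; have [->|p0] := eqVneq p 0; first by rewrite /cindex roots0 big_nil.
case E : (roots p a b) => [|x0 t]; first by rewrite /cindex E big_nil.
move: (roots_cons p a b x0 t) (roots_rcons p a b (last x0 t) (belast x0 t)).
rewrite -lastI E !eqxx => /esym/and5P[_ x0_in /eqP ax0 px0 _].
move=> /esym/and5P[_ l_in /eqP lb _ _].
set l := last x0 t in l_in lb.
move: x0_in l_in; rewrite !in_itv /= => /andP[ax0' x0b] /andP[al lb'].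
have x0l : x0 <= l.
  rewrite leNgt; apply: contraL px0 => lx0.
  by apply: (roots_nil p0 lb); rewrite in_itv /= lx0.
pose a' := (a + x0) / 2; pose b' := (l + b) / 2.
have a'b' : a' < b' by rewrite /a' /b'; lra.
have p_left : {in `]a, a'], forall x, ~~ root p x}.
  move=> y; rewrite in_itv /= => /andP[ay ya']; apply: (roots_nil p0 ax0).
  by rewrite in_itv /= ay (le_lt_trans ya') // /a'; lra.
have p_right : {in `[b', b[, forall x, ~~ root p x}.
  move=> y; rewrite in_itv /= => /andP[b'y yb]; apply: (roots_nil p0 lb).
  by rewrite in_itv /= yb (lt_le_trans _ b'y) // /b'; lra.
have sub_ab y : y \in `]a', b'[ -> y \in `]a, b[.
  by rewrite !in_itv /= /a' /b' => /andP[? ?]; apply/andP; split; lra.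
rewrite (@cindex_shrink _ _ _ a' b') ?/a' ?/b' //; try lra.
have pq_nroot y : y \in `]a, b[ -> ~~ root p y -> ~~ root (p * q) y.
  by move=> y_in py; rewrite rootM negb_or py q_nroot.
have a'_reg : ~~ root (p * q) a'.
  apply: pq_nroot; last by apply: p_left; rewrite in_itv /= lexx andbT /a'; lra.
  by rewrite in_itv /= /a'; apply/andP; split; lra.
have b'_reg : ~~ root (p * q) b'.
  apply: pq_nroot; last by apply: p_right; rewrite in_itv /= lexx /b'; lra.
  by rewrite in_itv /= /b'; apply/andP; split; lra.
have := cindex_inv a'b' a'_reg b'_reg.
rewrite [cindex a' b' p q]/cindex no_root_roots ?big_nil ?addr0 => [->|y /sub_ab].
  exact: variation_le1.
exact: q_nroot.
Qed.

Definition interlacing_roots p q I K := exists mu nu : seq R,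
  [/\ size mu = K, size nu = K.-1, {subset mu <= [pred x in I | root p x]},
      {subset nu <= root q} & interlace_lt mu nu].

Lemma interlacing_roots_sub p q I J K : {subset I <= J} ->
  interlacing_roots p q I K -> interlacing_roots p q J K.
Proof.
move=> IJ [mu [nu [size_mu size_nu mu_roots nu_roots mu_nu]]].
exists mu, nu; split=> // x /mu_roots /andP[/IJ x_in px]; exact/andP.
Qed.

Lemma cindex_gt0_root q p a b :
  0 < cindex a b q p -> exists2 x, x \in `]a, b[ & root p x.
Proof.
case E : (roots p a b) => [|x s]; first by rewrite /cindex E big_nil ltxx.
have x_root : x \in roots p a b by rewrite E mem_head.
by exists x; [apply: roots_in x_root | apply: root_roots x_root].
Qed.

Lemma cindex_gt0_interlacing q p a b :
  0 < cindex a b q p -> interlacing_roots p q `]a, b[ 1.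
Proof.
move=> /cindex_gt0_root[x x_in px]; exists [:: x], [::].
by split=> // y; rewrite inE => /eqP->; rewrite inE x_in.
Qed.

(* Induction on the roots of q in (a, b): if r is the last one, the index over
   (r, b) is at most 1, and when it is 1 a root of p in (r, b) is appended to
   mu and r to nu. *)
Lemma cindex_interlacing q p a b K :
  q != 0 -> (forall x, root p x -> ~~ root q x) ->
  (0 < K)%N -> K%:Z <= cindex a b q p -> interlacing_roots p q `]a, b[ K.
Proof.
move=> q0 pq_coprime; move Er : (roots q a b) => s.
elim/last_ind: s b Er K => [|s r IH] b Er [|[|K]] // _ K_le;
  try exact: cindex_gt0_interlacing (lt_le_trans ltr01 K_le).
  by have := le_trans K_le (cindex_le1 p (roots_nil q0 Er)).
have := roots_rcons q a b r s; rewrite Er eqxx.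
move=> /esym/and5P[_ r_in /eqP rb qr /eqP ar].
move: (r_in); rewrite in_itv /= => /andP[a_r r_b].
have a_r_sub : {subset `]a, r[ <= `]a, b[} by apply: subitvPr; rewrite /= bnd_simp ltW.
have := cindex_le1 p (roots_nil q0 rb).
rewrite (cindex_cat _ a_r r_b) ?(contraL (pq_coprime r)) // in K_le.
rewrite le_eqVlt => /orP[/eqP rb1 | rb_lt1]; last first.
  apply: interlacing_roots_sub a_r_sub (IH _ ar _ _ _) => //.
  by apply: (le_trans K_le); rewrite gerDl -ltzD1.
have [x x_in px] : exists2 x, x \in `]r, b[ & root p x.
  by apply: (@cindex_gt0_root q); rewrite rb1.
have [|mu [nu [size_mu size_nu mu_roots nu_roots mu_nu]]] := IH r ar K.+1 isT.
  by move: K_le; rewrite rb1 -addn1 PoszD lerD2r.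
exists (rcons mu x), (rcons nu r); split; rewrite ?size_rcons ?size_mu ?size_nu //.
- move=> y; rewrite mem_rcons inE => /orP[/eqP->|/mu_roots/andP[/a_r_sub y_in py]].
    rewrite inE px andbT; move: x_in; rewrite !in_itv /=.
    by move=> /andP[/(lt_trans a_r)-> ->].
  by rewrite inE y_in.
- by move=> y; rewrite mem_rcons inE => /orP[/eqP->//|/nu_roots].
apply: interlace_lt_rcons; rewrite ?size_mu ?size_nu ?(itvP x_in) //.
by move=> y /mu_roots/andP[y_in _]; rewrite (itvP y_in).
Qed.

Lemma cindexR_interlacing q p : p != 0 -> (forall x, root p x -> ~~ root q x) ->
  interlacing_roots p q `]-oo, +oo[ `|cindexR q p|%N.
Proof.
move=> p0; have [->|q0] := eqVneq q 0; first by rewrite cindexR0p; exists [::], [::].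
wlog index_ge0 : q q0 / 0 <= cindexR q p => [hwlog pq_coprime|pq_coprime].
  have [index_ge0|/ltW] := lerP 0 (cindexR q p); first exact: hwlog.
  rewrite -oppr_ge0 -cindexR_oppp => /hwlog; rewrite oppr_eq0 cindexR_oppp abszN.
  case=> // [x /pq_coprime|mu [nu [size_mu size_nu mu_roots nu_roots mu_nu]]].
    by rewrite rootN.
  by exists mu, nu; split=> // y /nu_roots; rewrite !unfold_in hornerN oppr_eq0.
have [K_eq0|K_gt0] := posnP `|cindexR q p|%N.
  by rewrite K_eq0; exists [::], [::].
pose B := cauchy_bound (p * q).
have pq0 : p * q != 0 by rewrite mulf_neq0.
have index_B : cindex (- B) B q p = cindexR q p.
  apply: cindexRP => x x_out.
    by have := le_cauchy_bound pq0 x_out; rewrite rootM negb_or => /andP[].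
  by have := ge_cauchy_bound pq0 x_out; rewrite rootM negb_or => /andP[].
have := cindex_interlacing (a := - B) (b := B) q0 pq_coprime K_gt0.
rewrite index_B gez0_abs // => /(_ (lexx _)).
by apply: interlacing_roots_sub => x; rewrite !in_itv.
Qed.

End InterlacingRoots.

Section HpolyInterlacing.
Variable R : rcfType.
Implicit Types (P Q : {poly R}) (ws : seq R[i]).

Definition interlaced_real_roots P Q (interlace : seq R -> seq R -> Prop) d :=
  exists mu nu : seq R, [/\ size mu = d, size nu = d.-1,
    \prod_(m <- mu) ('X - m%:P) %| P, \prod_(m <- nu) ('X - m%:P) %| Q
  & interlace mu nu].

Lemma sorted_roots_dvdp (p : {poly R}) (s : seq R) :
  {subset s <= root p} -> sorted <%R s -> \prod_(x <- s) ('X - x%:P) %| p.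
Proof.
move=> s_roots s_sorted; apply: uniq_roots_dvdp; first exact/allP.
by rewrite uniq_rootsE lt_sorted_uniq.
Qed.

Lemma hpoly_interlacing_lt P Q ws : all (fun w => complex.Im w != 0) ws ->
  hpoly P Q = \prod_(w <- ws) ('X - w%:P) ->
  interlaced_real_roots P Q (@interlace_lt R)
    `|(count_upper ws)%:Z - (count_lower ws)%:Z|%N.
Proof.
move=> ws_nonreal hPQ.
have [P1 [Q1 [hPQ1 P1_monic _ index_PQ]]] := cindexR_hpoly_prod ws_nonreal.
have [<- <-] := hpoly_inj (etrans hPQ1 (esym hPQ)).
have PQ_coprime x : root P1 x -> ~~ root Q1 x.
  move=> P1x; apply/negP => Q1x.
  have : root (\prod_(w <- ws) ('X - w%:P)) x%:C%C.
    rewrite -hPQ1 rootE /hpoly !hornerE !horner_map /= (eqP P1x) (eqP Q1x).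
    by rewrite mulr0 subr0.
  by rewrite root_prod_XsubC => /(allP ws_nonreal); rewrite eqxx.
case: (cindexR_interlacing (monic_neq0 P1_monic) PQ_coprime).
move=> mu [nu [size_mu size_nu mu_roots nu_roots mu_nu]].
have size_mu_nu : (size mu <= (size nu).+1)%N by rewrite size_mu size_nu leqSpred.
have [mu_sorted nu_sorted] := interlace_lt_sorted size_mu_nu mu_nu.
by exists mu, nu; split; rewrite -?index_PQ ?sorted_roots_dvdp.
Qed.

Lemma hpoly_split_real_roots P Q ws : hpoly P Q = \prod_(w <- ws) ('X - w%:P) ->
  let ts := [seq complex.Re w | w <- ws & complex.Im w == 0] in
  let rr := \prod_(t <- ts) ('X - t%:P) in
  exists P1 Q1, [/\ P = rr * P1, Q = rr * Q1 &
    hpoly P1 Q1 = \prod_(w <- [seq w <- ws | complex.Im w != 0]) ('X - w%:P)].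
Proof.
move=> hPQ ts rr.
have [P1 [Q1 [hPQ1 _ _ _]]] :=
  cindexR_hpoly_prod (filter_all (fun w => complex.Im w != 0) ws).
exists P1, Q1; have [-> ->] // : P = rr * P1 /\ Q = rr * Q1.
apply: hpoly_inj; rewrite hPQ hpoly_mull hPQ1.
have ws_perm := permEl (perm_filterC (fun w => complex.Im w == 0) ws).
rewrite -(perm_big _ ws_perm) big_cat /=.
congr (_ * _); rewrite /rr /ts rmorph_prod big_map; apply: eq_big_seq => w.
rewrite mem_filter => /andP[/eqP w_real _]; rewrite rmorphB /= map_polyX map_polyC /=.
by rewrite {1}[w]complexE w_real mulr0 addr0.
Qed.

Lemma interlaced_real_roots_mull P Q K (ts : seq R) :
  interlaced_real_roots P Q (@interlace_lt R) K ->
  let rr := \prod_(t <- ts) ('X - t%:P) in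
  interlaced_real_roots (rr * P) (rr * Q) (@interlace_le R) (K + size ts).
Proof.
move=> [mu [nu [size_mu size_nu mu_P nu_Q mu_nu]]] rr.
have prod_sort s : \prod_(x <- sort <=%R s) ('X - x%:P) = \prod_(x <- s) ('X - x%:P).
  exact/perm_big/permEl/perm_sort.
have [K0|K_gt0] := posnP K.
  exists (sort <=%R ts), (behead (sort <=%R ts)).
  rewrite size_behead size_sort K0; split=> //.
  - by rewrite prod_sort dvdp_mulIl.
  - apply: dvdp_trans (dvdp_mulIl rr Q); rewrite /rr -[X in _ %| X]prod_sort.
    by case: (sort _ _) => [|t s] /=; rewrite ?big_nil ?dvd1p // big_cons dvdp_mulIr.
  - exact/interlace_le_behead/sort_le_sorted.
have size_mu_nu : size mu = (size nu).+1 by rewrite size_mu size_nu prednK.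
have [mu_sorted nu_sorted] := interlace_lt_sorted (eq_leq size_mu_nu) mu_nu.
exists (sort <=%R (mu ++ ts)), (sort <=%R (nu ++ ts)).
rewrite !size_sort !size_cat size_mu size_nu !prod_sort !big_cat /=; split.
- by [].
- by lia.
- by rewrite mulrC dvdp_mul.
- by rewrite mulrC dvdp_mul.
have le_sorted (s : seq R) : sorted <%R s -> sorted <=%R s.
  by case/lt_sorted_is_uniq_le/andP.
apply: interlace_le_sort_cat (interlace_ltW mu_nu) => //; exact: le_sorted.
Qed.

Lemma count_nonreal (a : pred R) ws : ~~ a 0 ->
  count (fun w => a (complex.Im w)) [seq w <- ws | complex.Im w != 0] =
  count (fun w => a (complex.Im w)) ws.
Proof.
move=> a0; rewrite count_filter; apply: eq_count => w /=.
by case: (complex.Im w =P 0) => [->|_]; rewrite ?(negPf a0) ?andbT.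
Qed.

Lemma hpoly_interlacing_le P Q ws : hpoly P Q = \prod_(w <- ws) ('X - w%:P) ->
  interlaced_real_roots P Q (@interlace_le R)
    (`|(count_upper ws)%:Z - (count_lower ws)%:Z|%N + count_real ws).
Proof.
move=> /hpoly_split_real_roots[P1 [Q1 [-> -> hPQ1]]].
have := hpoly_interlacing_lt (filter_all (fun w => complex.Im w != 0) ws) hPQ1.
move/(interlaced_real_roots_mull [seq complex.Re w | w <- ws & complex.Im w == 0]).
rewrite size_map size_filter !(count_nonreal (a := fun x => 0 < x)) ?ltxx //.
by rewrite !(count_nonreal (a := fun x => x < 0)) ?ltxx.
Qed.

End HpolyInterlacing.

Lemma sum_even_odd (V : nmodType) m (f : nat -> V) :
  \sum_(k < m) f k = \sum_(j < uphalf m) f j.*2 + \sum_(j < m./2) f j.*2.+1.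
Proof.
elim: m => [|m IH]; first by rewrite !big_ord0 addr0.
rewrite big_ord_recr /= IH uphalf_half; have := odd_double_half m.
case: (odd m); rewrite /= ?add0n ?add1n => m_eq.
  by rewrite [in X in _ = _ + X]big_ord_recr /= m_eq addrA.
by rewrite [in X in _ = X + _]big_ord_recr /= m_eq addrAC.
Qed.

Lemma comp_prod_XsubC_scale (F : fieldType) (c : F) (rs : seq F) : c != 0 ->
  (\prod_(z <- rs) ('X - z%:P)) \Po (c *: 'X) =
  c ^+ size rs *: \prod_(z <- rs) ('X - (z / c)%:P).
Proof.
move=> c0; elim: rs => [|z rs IH]; first by rewrite !big_nil comp_polyC scale1r.
rewrite !big_cons comp_polyM IH comp_polyB comp_polyX comp_polyC /=.
have -> : c *: 'X - z%:P = c *: ('X - (z / c)%:P).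
  by rewrite scalerBr -[c *: _%:P]mul_polyC -polyCM mulrC divfK.
by rewrite exprS -scalerA -scalerAl -scalerAr.
Qed.

Section ImaginaryAxis.
Variable R : rcfType.
Local Notation toC := (map_poly (real_complex R)).

Lemma expi_subn n k :
  (k <= n)%N -> 'i%C ^+ (n - k) = 'i%C ^+ n * (- 'i%C) ^+ k :> R[i].
Proof.
move=> kn; rewrite -{2}(subnK kn) exprD -mulrA -exprMn mulrN -expr2 sqr_i opprK.
by rewrite expr1n mulr1.
Qed.

Lemma toC_scaleXn_comp (c : R) m :
  toC (c *: 'X^m) \Po ('i%C *: 'X) = (c%:C%C * 'i%C ^+ m) *: 'X^m.
Proof. by rewrite map_polyZ map_polyXn comp_polyZ comp_Xn_poly exprZn scalerA. Qed.

Lemma hpoly_PQ_comp n (a : nat -> R) :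
  'i%C ^+ n *: hpoly (Ppoly n a) (Qpoly n a) = toC (fpoly n a) \Po ('i%C *: 'X).
Proof.
rewrite /fpoly rmorph_sum linear_sum /=; under eq_bigr do rewrite toC_scaleXn_comp.
rewrite (sum_even_odd n.+1 (fun k => ((a k)%:C%C * 'i%C ^+ (n - k)) *: 'X^(n - k))).
rewrite /hpoly /Ppoly /Qpoly !rmorph_sum scalerBr mulr_sumr !scaler_sumr -sumrN /=.
congr (_ + _); apply: eq_bigr => j _.
  rewrite map_polyZ map_polyXn scalerA; congr (_ *: _).
  rewrite expi_subn; last by have := ltn_ord j; lia.
  rewrite -muln2 mulnC exprM sqrrN sqr_i rmorphM rmorphXn rmorphN1 /=; ring.
rewrite map_polyZ map_polyXn mul_polyC !scalerA -scaleNr; congr (_ *: _).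
rewrite expi_subn; last by have := ltn_ord j; lia.
rewrite exprS -muln2 mulnC exprM sqrrN sqr_i rmorphM rmorphXn rmorphN1 /=; ring.
Qed.

Lemma size_fpoly n (a : nat -> R) : a 0%N = 1 -> size (fpoly n a) = n.+1.
Proof.
move=> a0; rewrite /fpoly big_ord_recl subn0 a0 scale1r size_polyDl size_polyXn //.
rewrite ltnS (leq_trans (size_sum _ _ _)) //; apply/bigmax_leqP => i _.
rewrite (leq_trans (size_scale_leq _ _)) // size_polyXn lift0.
by have := ltn_ord i; lia.
Qed.

Lemma hpoly_PQ_roots n (a : nat -> R) (rs : seq R[i]) : a 0%N = 1 ->
  toC (fpoly n a) = \prod_(z <- rs) ('X - z%:P) ->
  size rs = n /\
  hpoly (Ppoly n a) (Qpoly n a) = \prod_(z <- rs) ('X - (z / 'i%C)%:P).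
Proof.
move=> a0 f_roots; have i0 : 'i%C != 0 :> R[i] by rewrite eq_complex /= oner_eq0 andbF.
have size_rs : size rs = n.
  move: (congr1 (size : {poly R[i]} -> nat) f_roots).
  by rewrite size_map_poly size_fpoly // size_prod_XsubC => -[].
split=> //; apply: (@scalerI _ _ ('i%C ^+ n)); first by rewrite expf_neq0.
by rewrite hpoly_PQ_comp f_roots comp_prod_XsubC_scale // size_rs.
Qed.

End ImaginaryAxis.

Lemma count_sgn (R : realDomainType) (T : Type) (f : T -> R) (s : seq T) :
  (count (fun x => 0 < f x)%R s + count (fun x => f x < 0)%R s +
   count (fun x => f x == 0)%R s)%N = size s.
Proof. by elim: s => [|x s IH] //=; rewrite -IH; case: ltrgt0P => _ /=; lia. Qed.

Lemma Im_divi (R : rcfType) (z : R[i]) : complex.Im (z / 'i%C) = - complex.Re z.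
Proof.
have -> : ('i%C : R[i])^-1 = - 'i%C.
  have i0 : 'i%C != 0 :> R[i] by rewrite eq_complex /= oner_eq0 andbF.
  by apply: (mulIf i0); rewrite mulVf // mulNr -expr2 sqr_i opprK.
by rewrite mulrN raddfN /= ImiRe.
Qed.

Lemma sub_double_minn (m n k : nat) :
  (m + n + k - (minn m n).*2)%N = (`|n%:Z - m%:Z|%N + k)%N.
Proof.
by case: (leqP m n) => mn; [rewrite distnEl | rewrite distnEr ?(ltnW mn)]; lia.
Qed.

Theorem corollary3p3 (R : rcfType) (n : nat) (a : nat -> R)
  (rs : seq R[i]) :
  a 0%N = 1 ->
  (* rs is the list of complex roots of f, counted with multiplicity *)
  map_poly (real_complex R) (fpoly n a) = \prod_(z <- rs) ('X - z%:P) ->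
  let npos := count (fun z : R[i] => 0 < complex.Re z) rs in
  let nneg := count (fun z : R[i] => complex.Re z < 0) rs in
  let nzero := count (fun z : R[i] => complex.Re z == 0) rs in
  (nzero < n)%N ->
  let d := (n - (minn npos nneg).*2)%N in
  (exists (mu nu : seq R),
      [/\ size mu = d, size nu = d.-1,
          \prod_(m <- mu) ('X - m%:P) %| Ppoly n a,
          \prod_(m <- nu) ('X - m%:P) %| Qpoly n a
        & interlace_le mu nu]) /\
  (nzero = 0%N ->
    exists (mu nu : seq R),
      [/\ size mu = d, size nu = d.-1,
          \prod_(m <- mu) ('X - m%:P) %| Ppoly n a,
          \prod_(m <- nu) ('X - m%:P) %| Qpoly n a
        & interlace_lt mu nu]).
Proof.
move=> a0 f_roots npos nneg nzero _ d.
have [size_rs hPQ_rs] := hpoly_PQ_roots a0 f_roots.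
pose ws := [seq z / 'i%C | z <- rs].
have hPQ : hpoly (Ppoly n a) (Qpoly n a) = \prod_(w <- ws) ('X - w%:P) by rewrite big_map.
have count_ws (c : pred R) :
    count (fun w => c (complex.Im w)) ws = count (fun z => c (- complex.Re z)) rs.
  by rewrite count_map; apply: eq_count => z /=; rewrite Im_divi.
have up : count_upper ws = nneg.
  by rewrite (count_ws (fun x => 0 < x)); apply: eq_count => z /=; rewrite oppr_gt0.
have down : count_lower ws = npos.
  by rewrite (count_ws (fun x => x < 0)); apply: eq_count => z /=; rewrite oppr_lt0.
have real : count_real ws = nzero.
  by rewrite (count_ws (fun x => x == 0)); apply: eq_count => z /=; rewrite oppr_eq0.
have d_eq : d = (`|nneg%:Z - npos%:Z|%N + nzero)%N.
  by rewrite /d -size_rs -(count_sgn (@complex.Re R)) sub_double_minn.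
split; first by rewrite d_eq -up -down -real; exact: hpoly_interlacing_le.
move=> nzero0; rewrite d_eq nzero0 addn0 -up -down; apply: hpoly_interlacing_lt hPQ.
move: nzero0; rewrite -real => /eqP; rewrite -leqn0 leqNgt -has_count => /hasPn.
by move=> ws_nonreal; apply/allP.
Qed.
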